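(* Let $\nu,\mu$ be strict partitions with $\mu\subseteq\nu$ and let $T$ be a semistandard shifted tableau of skew shape $\nu/\mu$. At any stage of the mixed rectification of $T$, if an entry $x$ has not yet moved, then every entry located southeast of $x$ is at least as large as $x$.
   Context: A strict partition $\theta=(\theta_1>\dots>\theta_k>0)$ is identified with its shifted Young diagram: row $i$ consists of the cells $(i,j)$ with $i\le j\le i+\theta_i-1$ (English convention, row 1 on top). For strict partitions $\mu\subseteq\nu$, the skew shape $\nu/\mu$ is the set of cells of $\nu$ not in $\mu$. A cell $(i,i)$ is diagonal. For a cell $\mathsf b=(i,j)$ write $\mathsf b^{\uparrow}=(i-1,j)$, $\mathsf b^{\leftarrow}=(i,j-1)$, $\mathsf b^{\downarrow}=(i+1,j)$, $\mathsf b^{\uparrow\leftarrow}=(i-1,j-1)$. Alphabet: for each positive integer $i$ there is a low letter $\underline{i}$ and a high letter $\overline{\imath}$, ordered $\underline1<\overline1<\underline2<\overline2<\cdots$. Raising means replacing $\underline i$ by $\overline\imath$; lowering the reverse. A semistandard (shifted) tableau of shape $\nu/\mu$ is a filling of the cells of $\nu/\mu$ with such letters so that rows weakly increase left to right, columns weakly increase top to bottom, no diagonal cell contains a low letter, each column contains at most one copy of each high letter, and each row contains at most one copy of each low letter. A tableau with holes additionally allows a symbol $\bullet$ (neither high nor low, allowed anywhere and repeatedly). Mixed rectification of $T$: place a $\bullet$ in every cell of the bottom row of $\mu$. Bullets are swapped with entries by mixed slides, and a bullet is deleted as soon as there is no entry of the tableau to its southeast. An entry $y$ in cell $\mathsf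 b$ is available if $\mathsf b^\uparrow$ or $\mathsf b^\leftarrow$ contains a $\bullet$. Available entries are ordered by the letter order, ties broken so that among equal low letters the northmost is least and among equal high letters the westmost is least. Let $y\in\mathsf b$ be the least available entry and apply the unique applicable slide from the first of the collections (R1)–(R6) in which some slide applies (a cell vacated by an entry receives a $\bullet$): (R1) if $\mathsf b^\uparrow,\mathsf b^\leftarrow,\mathsf b^{\uparrow\leftarrow}$ all contain $\bullet$, move $y$ to $\mathsf b^{\uparrow\leftarrow}$; or if $\mathsf b$ is diagonal and $\mathsf b^\uparrow,\mathsf b^{\uparrow\leftarrow}$ contain $\bullet$, move $y$ to $\mathsf b^{\uparrow\leftarrow}$. (R2) if $\mathsf b^{\uparrow\leftarrow}$ contains an entry $x$ and $\mathsf b^\uparrow,\mathsf b^\leftarrow$ contain $\bullet$: if $y$ is low and $x\ne y$, move $y$ to $\mathsf b^\uparrow$; if $y$ is high and $x\neq y$, move $y$ to $\mathsf b^\leftarrow$. (R3) if $\mathsf b^\leftarrow$ is diagonal, $\mathsf b^{\uparrow\leftarrow}$ and the cell left of it contain entries, $\mathsf b^\uparrow,\mathsf b^\leftarrow$ contain $\bullet$ and $y$ is low, raise $y$ and move it to $\mathsf b^\leftarrow$; or if $\mathsf b^{\uparrow\leftarrow}$ contains an entry, $\mathsf b^\uparrow,\mathsf b^\leftarrow$ contain $\bullet$ and $y$ is low, move $y$ to $\mathsf b^\leftarrow$; or in the same situation with $y$ high, move $y$ to $\mathsf b^\uparrow$. (R4) if $y=\underline k$, $\mathsf b^\leftarrow$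 is diagonal and contains $\bullet$, and the diagonal cell $\mathsf b^\downarrow$ contains $\overline k$: put $\overline k$ in $\mathsf b^\leftarrow$ and in $\mathsf b$, and $\bullet$ in $\mathsf b^\downarrow$. (R5) if $\mathsf b^\leftarrow$ is diagonal and contains $\bullet$ and $\mathsf b^\downarrow$ is a cell, raise $y$ and move it to $\mathsf b^\leftarrow$; or if $\mathsf b$ is diagonal, $y$ is high, $\mathsf b^\uparrow$ contains $\bullet$ and $\mathsf b^{\uparrow\leftarrow}$ contains an entry, lower $y$ and move it to $\mathsf b^\uparrow$. (R6) if $\mathsf b^\leftarrow$ contains $\bullet$, move $y$ to $\mathsf b^\leftarrow$; if $\mathsf b^\uparrow$ contains $\bullet$, move $y$ to $\mathsf b^\uparrow$. Repeat with the new least available entry until no entry is available; the result has some shape $\nu'/\mu'$. Then place bullets in the bottom row of $\mu'$ and repeat, until a tableau of straight shape is obtained. *)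

From mathcomp Require Import all_boot.
Set Implicit Arguments. Unset Strict Implicit. Unset Printing Implicit Defensive.

(* Letter k false = low letter  \underline{k};  Letter k true = high letter \overline{k}. *)
Record letter := Letter { lidx : nat; lhigh : bool }.

(* order 1 < 1' < 2 < 2' < ... : rank = 2k + [high] *)
Definition rank (l : letter) : nat := (lidx l).*2 + lhigh l.
Definition leL (x y : letter) : bool := rank x <= rank y.
Definition raise (l : letter) : letter := Letter (lidx l) true.
Definition lower (l : letter) : letter := Letter (lidx l) false.

(* ---------- cells and shapes (1-indexed, English, shifted) ---------- *)
Definition cell := (nat * nat)%type.

Definition in_shape (l : seq nat) (c : cell) : bool :=
  [&& 0 < c.1, c.1 <= size l, c.1 <= c.2 & c.2 < c.1 + nth 0 l c.1.-1].

Definition strict_partition (l : seq nat) : bool :=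
  sorted (fun a b => b < a) l && all (fun a => 0 < a) l.

Definition skew (nu mu : seq nat) (c : cell) : bool :=
  in_shape nu c && ~~ in_shape mu c.

Definition diagonal (c : cell) : bool := c.1 == c.2.

Definition up (c : cell) : cell := (c.1.-1, c.2).
Definition left (c : cell) : cell := (c.1, c.2.-1).
Definition down (c : cell) : cell := (c.1.+1, c.2).

Definition se (c c' : cell) : Prop := c.1 <= c'.1 /\ c.2 <= c'.2.

(* semistandard shifted tableau of shape nu/mu (T only matters on nu/mu) *)
Definition semistandard (nu mu : seq nat) (T : cell -> letter) : Prop :=
  (forall c, skew nu mu c -> 0 < lidx (T c)) /\
  (forall i j j', skew nu mu (i, j) -> skew nu mu (i, j') -> j < j' ->
     leL (T (i, j)) (T (i, j'))) /\
  (forall i i' j, skew nu mu (i, j) -> skew nu mu (i', j) -> i < i' ->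
     leL (T (i, j)) (T (i', j))) /\
  (forall c, skew nu mu c -> diagonal c -> lhigh (T c)) /\
  (forall i i' j, skew nu mu (i, j) -> skew nu mu (i', j) -> i <> i' ->
     T (i, j) = T (i', j) -> ~~ lhigh (T (i, j))) /\
  (forall i j j', skew nu mu (i, j) -> skew nu mu (i, j') -> j <> j' ->
     T (i, j) = T (i, j') -> lhigh (T (i, j))).

(* Outside: not a cell of the current tableau; Inner: cell of the current inner
   shape mu'; Hole: a bullet; Ent x: an entry. *)
Inductive content := Outside | Inner | Hole | Ent of letter.

Definition state := cell -> content.

Definition init (nu mu : seq nat) (T : cell -> letter) : state :=
  fun c => if skew nu mu c then Ent (T c)
           else if in_shape mu c then Inner else Outside.

Definition upd (f : state) (c : cell) (v : content) : state :=
  fun c' => if c' == c then v else f c'.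

Definition move (f : state) (b : cell) (v : content) (t : cell) : state :=
  upd (upd f b Hole) t v.

Definition isEnt (f : state) (c : cell) : Prop := exists x, f c = Ent x.

Definition clean (f g : state) : Prop :=
  forall c,
    ((f c = Hole /\ (forall c', se c c' -> ~ isEnt f c')) -> g c = Outside) /\
    (~ (f c = Hole /\ (forall c', se c c' -> ~ isEnt f c')) -> g c = f c).

Definition available (f : state) (b : cell) : Prop :=
  isEnt f b /\ (f (up b) = Hole \/ f (left b) = Hole).

Definition precedes (f : state) (b b' : cell) : Prop :=
  exists y y', f b = Ent y /\ f b' = Ent y' /\
    (rank y < rank y' \/
     (y = y' /\ (if lhigh y then b.2 < b'.2 else b.1 < b'.1))).

Definition least_available (f : state) (b : cell) : Prop :=
  available f b /\ forall b', available f b' -> b' <> b -> precedes f b b'.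

(* ---------- the slide rules (y is the entry in b) ---------- *)
Section Rules.
Variables (f : state) (b : cell) (y : letter) (g : state).
Let u := up b.
Let l := left b.
Let ul := up (left b).
Let ll := left (up (left b)).
Let d := down b.

Definition R1 : Prop :=
  ((f u = Hole /\ f l = Hole /\ f ul = Hole) \/
   (diagonal b /\ f u = Hole /\ f ul = Hole)) /\
  g = move f b (Ent y) ul.

Definition R2 : Prop :=
  exists x, f ul = Ent x /\ f u = Hole /\ f l = Hole /\ x <> y /\
    g = (if lhigh y then move f b (Ent y) l else move f b (Ent y) u).

Definition R3a_cond : Prop :=
  diagonal l /\ isEnt f ul /\ isEnt f ll /\ f u = Hole /\ f l = Hole /\ ~~ lhigh y.
Definition R3_pre : Prop := isEnt f ul /\ f u = Hole /\ f l = Hole.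

Definition R3 : Prop :=
  (R3a_cond /\ g = move f b (Ent (raise y)) l) \/
  (~ R3a_cond /\ R3_pre /\ ~~ lhigh y /\ g = move f b (Ent y) l) \/
  (R3_pre /\ lhigh y /\ g = move f b (Ent y) u).

Definition R4 : Prop :=
  ~~ lhigh y /\ diagonal l /\ f l = Hole /\ diagonal d /\
  f d = Ent (Letter (lidx y) true) /\
  g = upd (upd (upd f l (Ent (Letter (lidx y) true))) b
             (Ent (Letter (lidx y) true))) d Hole.

Definition R5a_cond : Prop :=
  diagonal l /\ f l = Hole /\ (f d = Hole \/ isEnt f d).
Definition R5b_cond : Prop :=
  diagonal b /\ lhigh y /\ f u = Hole /\ isEnt f ul.

Definition R5 : Prop :=
  (R5a_cond /\ g = move f b (Ent (raise y)) l) \/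
  (~ R5a_cond /\ R5b_cond /\ g = move f b (Ent (lower y)) u).

Definition R6 : Prop :=
  (f l = Hole /\ g = move f b (Ent y) l) \/
  (f l <> Hole /\ f u = Hole /\ g = move f b (Ent y) u).
End Rules.

Definition applies (R : state -> cell -> letter -> state -> Prop)
  (f : state) (b : cell) (y : letter) : Prop := exists g, R f b y g.

Definition slide (f : state) (b : cell) (y : letter) (g : state) : Prop :=
  R1 f b y g \/
  (~ applies R1 f b y /\ R2 f b y g) \/
  (~ applies R1 f b y /\ ~ applies R2 f b y /\ R3 f b y g) \/
  (~ applies R1 f b y /\ ~ applies R2 f b y /\ ~ applies R3 f b y /\ R4 f b y g) \/
  (~ applies R1 f b y /\ ~ applies R2 f b y /\ ~ applies R3 f b y /\
   ~ applies R4 f b y /\ R5 f b y g) \/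
  (~ applies R1 f b y /\ ~ applies R2 f b y /\ ~ applies R3 f b y /\
   ~ applies R4 f b y /\ ~ applies R5 f b y /\ R6 f b y g).

Definition place_row (r : nat) (f : state) : state :=
  fun c => match f c with
           | Inner => if c.1 == r then Hole else Inner
           | v => v
           end.

Definition mstep (f g : state) : Prop :=
  (exists b y h, least_available f b /\ f b = Ent y /\ slide f b y h /\ clean h g)
  \/
  ((forall b, ~ available f b) /\
   exists r h, (exists j, f (r, j) = Inner) /\
     (forall i j, f (i, j) = Inner -> i <= r) /\
     h = place_row r f /\ clean h g).

From mathcomp Require Import all_boot zify.
Set Implicit Arguments. Unset Strict Implicit.

(* Proof: for the entry x of T in cell c, bound every entry w in a cell p
   weakly southeast of c by [entry_le c x p w]: x <= w, equality only in the
   row of c if x is high and only in the column of c if x is low, and, if x is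
   low and p lies below row c.2, the index of w exceeds that of x.  A semistandard
   tableau satisfies the last clause because the diagonal cell (c.2, c.2) holds
   a high letter >= x.  Every slide moves an entry weakly northwest, so nothing
   enters the quadrant of c from outside, and the letters it writes are the
   moved letter or its raise, except in (R5) where a high letter on the
   diagonal is lowered while moving up; the last clause is exactly what keeps
   the bound through that step. *)

Lemma rank_inj : injective rank.
Proof.
move=> [i hi] [j hj]; rewrite /rank /= => E.
have Eij : i = j by lia.
have Eh : hi = hj by case: hi hj E => [] [] /=; lia.
by rewrite Eij Eh.
Qed.

Lemma leL_anti x y : leL x y -> leL y x -> x = y.
Proof. by rewrite /leL => xy yx; apply: rank_inj; apply/eqP; rewrite eqn_leq xy. Qed.

Lemma leL_raise y : leL y (raise y).
Proof. by case: y => i h; rewrite /leL /rank /=; lia. Qed.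

Lemma raise_high y : lhigh y -> raise y = y.
Proof. by case: y => ? []. Qed.

Lemma up_neq_pos b : up b <> b -> 0 < b.1.
Proof. by case: b => [[|i] j]. Qed.

Lemma se_trans c p q : se c p -> se p q -> se c q.
Proof. by rewrite /se; lia. Qed.

Lemma se_up b : se (up b) b.
Proof. by split=> //=; exact: leq_pred. Qed.

Lemma se_left b : se (left b) b.
Proof. by split=> //=; exact: leq_pred. Qed.

Lemma se_up_left b : se (up (left b)) b.
Proof. by split=> /=; exact: leq_pred. Qed.

Definition entry_le (c : cell) (x : letter) (p : cell) (w : letter) : Prop :=
  [/\ leL x w, x = w -> lhigh x -> p.1 = c.1, x = w -> ~~ lhigh x -> p.2 = c.2
    & ~~ lhigh x -> c.2 < p.1 -> lidx x < lidx w].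

Definition se_entries_ge (f : state) (c : cell) (x : letter) : Prop :=
  forall p w, se c p -> f p = Ent w -> entry_le c x p w.

Lemma entry_le_shift c x b y t :
  entry_le c x b y -> se c t -> se t b -> entry_le c x t y.
Proof.
case=> le E1 E2 K [c1 c2] [t1 t2]; split=> // [E h | E h | h lt].
- by have := E1 E h; lia.
- by have := E2 E h; lia.
- by apply: K h _; lia.
Qed.

Lemma entry_le_raise c x p y : entry_le c x p y -> entry_le c x p (raise y).
Proof.
case Hy: (lhigh y); first by rewrite raise_high.
case=> le _ _ K; split.
- exact: leq_trans le (leL_raise y).
- by move=> E; move: le; rewrite E /leL /rank /= Hy; lia.
- by move=> E; move: le; rewrite E /leL /rank /= Hy; lia.
- exact: K.
Qed.

Lemma entry_le_lower_diag c x b y :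
  entry_le c x b y -> lhigh y -> diagonal b -> 0 < b.1 -> se c (up b) ->
  entry_le c x (up b) (lower y).
Proof.
case: b => k k'; rewrite /diagonal /= => -[le E1 _ K] Hy /eqP <- k0 [/= c1 c2].
have xy : x <> y by move=> E; have := E1 E; rewrite E Hy => /(_ isT) /=; lia.
have lt : rank x < rank y.
  by rewrite ltn_neqAle; apply/andP; split=> //; apply/eqP => /rank_inj.
split=> [||E xl|xl lt'].
- by move: lt; rewrite /leL /rank /= Hy; lia.
- by move=> ->.
- case: (ltngtP c.2 k) => [/(K xl)|gt|//]; [by rewrite E /=; lia | lia].
- by apply: K xl _; move: lt' => /=; lia.
Qed.

Definition nw_move (f : state) (b : cell) (y : letter) (g : state) : Prop :=
  exists t v, [/\ g = move f b (Ent v) t, f t = Hole, se t b &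
    v = y \/ v = raise y \/ [/\ t = up b, lhigh y, diagonal b & v = lower y]].

Lemma slide_some_rule f b y g : slide f b y g ->
  R1 f b y g \/ R2 f b y g \/ R3 f b y g \/ R4 f b y g \/ R5 f b y g \/ R6 f b y g.
Proof. by rewrite /slide; tauto. Qed.

Lemma slide_nw_move_or_R4 f b y g :
  slide f b y g -> nw_move f b y g \/ R4 f b y g.
Proof.
case/slide_some_rule=> [[Hc ->]|[[_ [_ [Hu [Hl [_ ->]]]]]|[R|[R|[R|R]]]]];
  [left..|by right|left|left].
- exists (up (left b)), y; split=> //; last by left.
  + by case: Hc => -[_ [_ ->]].
  + exact: se_up_left.
- by case: (lhigh y); [exists (left b), y | exists (up b), y];
    split=> //; try exact: se_left; try exact: se_up; left.
- case: R => [[[_ [_ [_ [_ [Hl _]]]]] ->]|[[_ [[_ [_ Hl]] [_ ->]]]|[[_ [Hu _]] [_ ->]]]].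
  + by exists (left b), (raise y); split=> //; [exact: se_left | right; left].
  + by exists (left b), y; split=> //; [exact: se_left | left].
  + by exists (up b), y; split=> //; [exact: se_up | left].
- case: R => [[[_ [Hl _]] ->]|[_ [[Hd [Hy [Hu _]]] ->]]].
  + by exists (left b), (raise y); split=> //; [exact: se_left | right; left].
  + by exists (up b), (lower y); split=> //; [exact: se_up | right; right].
- case: R => [[Hl ->]|[_ [Hu ->]]].
  + by exists (left b), y; split=> //; [exact: se_left | left].
  + by exists (up b), y; split=> //; [exact: se_up | left].
Qed.

Lemma move_Ent f b v t p w : move f b v t p = Ent w ->
  (p = t /\ v = Ent w) \/ f p = Ent w.
Proof.
rewrite /move /upd; case: eqP => [-> -> | _]; first by left.
by case: eqP => // _ fp; right.
Qed.

Lemma clean_Ent h g p w : clean h g -> g p = Ent w -> h p = Ent w.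
Proof.
move=> /(_ p) [deleted kept] gp.
by rewrite -kept // => /deleted; rewrite gp.
Qed.

Lemma place_row_Ent r f p w : place_row r f p = Ent w -> f p = Ent w.
Proof. by rewrite /place_row; case: (f p) => //; case: ifP. Qed.

Lemma nw_move_se_entries_ge f b y g c x :
  f b = Ent y -> nw_move f b y g -> se_entries_ge f c x -> se_entries_ge g c x.
Proof.
move=> fb [t [v [-> ft tb Hv]]] ge_f p w cp.
case/move_Ent=> [[pt [<-]]|/ge_f]; last exact; subst p.
have le_b := ge_f b y (se_trans cp tb) fb.
case: Hv => [->|[->|[Et Hy Hd ->]]].
- exact: entry_le_shift le_b cp tb.
- exact/entry_le_raise/(entry_le_shift le_b cp tb).
- rewrite Et in cp ft *; apply: entry_le_lower_diag => //.
  by apply: up_neq_pos => E; move: ft; rewrite E fb.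
Qed.

Lemma R4_se_entries_ge f b y g c x :
  f b = Ent y -> R4 f b y g -> se_entries_ge f c x -> se_entries_ge g c x.
Proof.
move=> fb [_ [_ [_ [_ [_ ->]]]]] ge_f p w cp; rewrite /upd.
case: eqP => // _; case: eqP => [pb [<-]|_].
  by subst p; exact: entry_le_raise (ge_f b y cp fb).
case: eqP => [pl [<-]|_ /ge_f]; last exact; subst p.
have le_b := ge_f b y (se_trans cp (se_left b)) fb.
exact/entry_le_raise/(entry_le_shift le_b cp (se_left b)).
Qed.

Lemma mstep_se_entries_ge f g c x :
  mstep f g -> se_entries_ge f c x -> se_entries_ge g c x.
Proof.
case=> [[b [y [h [_ [fb [sl cl]]]]]] | [_ [r [h [_ [_ [-> cl]]]]]]] ge_f p w cp
  /(clean_Ent cl).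
- have ge_h : se_entries_ge h c x.
    have [nw|r4] := slide_nw_move_or_R4 sl.
    + exact: nw_move_se_entries_ge fb nw ge_f.
    + exact: R4_se_entries_ge fb r4 ge_f.
  exact: ge_h.
- by move/place_row_Ent; apply: ge_f.
Qed.

Lemma strict_partition_gap l i j : strict_partition l -> i <= j -> j < size l ->
  nth 0 l j + (j - i) <= nth 0 l i.
Proof.
move=> /andP [decr _]; elim: j => [|j IH] ij j_lt.
  by move: ij; rewrite leqn0 => /eqP ->; rewrite addn0.
case: (ltngtP i j.+1) => [ij'|ji|->]; [|lia|by rewrite subnn addn0].
have := IH (ltnSE ij') (ltnW j_lt).
have := (sortedP 0 decr) j j_lt; lia.
Qed.

Lemma strict_partition_nth_gt0 l i : strict_partition l -> i < size l -> 0 < nth 0 l i.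
Proof. by move=> /andP [_ /(all_nthP 0) pos] /pos. Qed.

Section InitialTableau.

Variables (nu mu : seq nat) (T : cell -> letter).
Hypotheses (nu_strict : strict_partition nu) (mu_strict : strict_partition mu).
Hypothesis T_ss : semistandard nu mu T.

Lemma skew_corner a b a' b' : skew nu mu (a, b) -> skew nu mu (a', b') ->
  a <= a' -> b <= b' -> skew nu mu (a, b').
Proof.
rewrite /skew /in_shape /= => /andP [/and4P [a0 a_nu ab b_nu] not_mu].
move=> /andP [/and4P [a'0 a'_nu a'b' b'_nu] _] aa' bb'.
apply/andP; split.
  apply/and4P; split=> //; first lia.
  by have := strict_partition_gap nu_strict (i := a.-1) (j := a'.-1); lia.
by apply: contra not_mu => /and4P [? ? ? ?]; apply/and4P; split=> //; lia.
Qed.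

Lemma skew_diag a b a' b' : skew nu mu (a, b) -> skew nu mu (a', b') ->
  b < a' -> skew nu mu (b, b).
Proof.
rewrite /skew /in_shape /= => /andP [/and4P [a0 a_nu ab b_nu] not_mu].
move=> /andP [/and4P [a'0 a'_nu a'b' b'_nu] _] ba'.
apply/andP; split.
  apply/and4P; split=> //; try lia.
  by have := strict_partition_nth_gt0 nu_strict (i := b.-1); lia.
apply: contra not_mu => /and4P [? ? _ ?]; apply/and4P; split=> //; try lia.
by have := strict_partition_gap mu_strict (i := a.-1) (j := b.-1); lia.
Qed.

Lemma semistandard_row_le i j j' : skew nu mu (i, j) -> skew nu mu (i, j') ->
  j <= j' -> leL (T (i, j)) (T (i, j')).
Proof.
have [_ [row _]] := T_ss.
move=> ij ij'; rewrite leq_eqVlt => /orP [/eqP <- | /(row _ _ _ ij ij') //].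
exact: leqnn.
Qed.

Lemma semistandard_col_le i i' j : skew nu mu (i, j) -> skew nu mu (i', j) ->
  i <= i' -> leL (T (i, j)) (T (i', j)).
Proof.
have [_ [_ [col _]]] := T_ss.
move=> ij i'j; rewrite leq_eqVlt => /orP [/eqP <- | /(col _ _ _ ij i'j) //].
exact: leqnn.
Qed.

Lemma semistandard_se_le c p : skew nu mu c -> skew nu mu p -> se c p ->
  [/\ leL (T c) (T p), T c = T p -> lhigh (T c) -> p.1 = c.1
    & T c = T p -> ~~ lhigh (T c) -> p.2 = c.2].
Proof.
case: c p => a b [a' b'] c_sk p_sk [/= aa' bb'].
have [_ [_ [_ [_ [col_high row_low]]]]] := T_ss.
have q_sk := skew_corner c_sk p_sk aa' bb'.
have le1 := semistandard_row_le c_sk q_sk bb'.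
have le2 := semistandard_col_le q_sk p_sk aa'.
split=> [|E xh|E xl]; first exact: leq_trans le1 le2.
- have Eq : T (a, b') = T (a', b') by apply: leL_anti le2 _; rewrite -E.
  case: (ltngtP a a') aa' => [lt|//|->//] _.
  by have := col_high _ _ _ q_sk p_sk ltac:(lia) Eq; rewrite Eq -E xh.
- have Eq : T (a, b) = T (a, b') by apply: leL_anti le1 _; rewrite E.
  case: (ltngtP b b') bb' => [lt|//|->//] _.
  by have := row_low _ _ _ c_sk q_sk ltac:(lia) Eq; rewrite (negbTE xl).
Qed.

Lemma semistandard_entry_le c p : skew nu mu c -> skew nu mu p -> se c p ->
  entry_le c (T c) p (T p).
Proof.
case: c p => a b [a' b'] c_sk p_sk cp.
have [le Eh El] := semistandard_se_le c_sk p_sk cp; split=> // xl /= ba'.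
case: cp => /= aa' bb'.
have [_ [_ [_ [diag _]]]] := T_ss.
have e_sk := skew_diag c_sk p_sk ba'.
have ab : a < b.
  have [/and4P [_ _ ab _] _] := andP c_sk.
  rewrite ltn_neqAle ab andbT; apply: contraNneq xl => eab.
  by apply: diag _ c_sk _; apply/eqP.
have e_high : lhigh (T (b, b)) := diag _ e_sk (eqxx b).
have le1 := semistandard_col_le c_sk e_sk (ltnW ab).
have [le2 e_row _] := semistandard_se_le e_sk p_sk (conj (ltnW ba') bb').
have ne : T (b, b) <> T (a', b') by move=> E; have := e_row E e_high => /=; lia.
have lt2 : rank (T (b, b)) < rank (T (a', b')).
  by rewrite ltn_neqAle; apply/andP; split=> //; apply/eqP => /rank_inj.
by move: le1 lt2; rewrite /leL /rank e_high (negbTE xl); lia.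
Qed.

Lemma init_Ent q w : init nu mu T q = Ent w -> skew nu mu q /\ T q = w.
Proof. by rewrite /init; case: ifP => [_ [<-] | _] //; case: ifP. Qed.

Lemma init_se_entries_ge c : skew nu mu c -> se_entries_ge (init nu mu T) c (T c).
Proof.
move=> c_sk p w cp /init_Ent [p_sk <-].
exact: semistandard_entry_le.
Qed.

End InitialTableau.

Theorem lemma3p5 (nu mu : seq nat) (T : cell -> letter) :
  strict_partition nu -> strict_partition mu ->
  (forall c, in_shape mu c -> in_shape nu c) ->
  semistandard nu mu T ->
  forall (n : nat) (sigma : nat -> state),
    sigma 0 = init nu mu T ->
    (forall k, k < n -> mstep (sigma k) (sigma k.+1)) ->
    forall (c : cell) (x : letter),
      (forall k, k <= n -> sigma k c = Ent x) ->
      forall (c' : cell) (y : letter),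
        se c c' -> sigma n c' = Ent y -> leL x y.
Proof.
move=> nu_strict mu_strict _ T_ss n sigma sigma0 steps c x x_fixed c' y cc' c'y.
have [c_sk Tc] : skew nu mu c /\ T c = x.
  by apply: init_Ent; rewrite -sigma0 x_fixed.
suff /(_ n (leqnn n)) ge_n : forall k, k <= n -> se_entries_ge (sigma k) c x.
  by have [] := ge_n c' y cc' c'y.
elim=> [_|k IH lt_kn]; first by rewrite sigma0 -Tc; exact: init_se_entries_ge.
exact: mstep_se_entries_ge (steps k lt_kn) (IH (ltnW lt_kn)).
Qed.
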